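(* Let $P$ be a poset whose vertex set $V$ is a finite subset of $\mathbb{Z}_{>0}$ (with order $\prec$ unrelated to the integer order). Let $D(P)$ be the digraph on $V$ with an edge $u\to v$ iff $v\prec u$, and let $G(P)$ be the incomparability graph of $P$. Then $\Xi_{D(P)}(\mathbf{x},t)=X_{G(P)}(\mathbf{x},t)$.
   Context: $X_G(\mathbf{x},t)=\sum_\kappa t^{\mathrm{asc}(\kappa)}\prod_v x_{\kappa(v)}$ over proper colorings $\kappa:V\to\mathbb{Z}_{>0}$, with $\mathrm{asc}(\kappa)$ the number of edges $\{u,v\}$, $u<v$, $\kappa(u)<\kappa(v)$. The incomparability graph joins two distinct vertices iff they are incomparable in $P$. For a digraph $D$ on $V$ with $n=|V|$: a sequencing is a bijection $q:[n]\to V$; for a composition $\beta=(\beta_1,\dots,\beta_\ell)$ of $n$ put $B_i=\beta_1+\cdots+\beta_i$, $B_0=0$. An ordered path cover is a pair $(q,\beta)$ such that $q(B_{i-1}+1)\to\cdots\to q(B_i)$ is a directed path in $D$ for every $i$. $\mathrm{asc}(q)$ is the number of pairs $\{u,v\}$ with (1) either both $u\to v$ and $v\to u$ are edges or neither is, (2) $u<v$, (3) $v$ appears later than $u$ in $q$. $\Xi_D(\mathbf{x},t)=\sum_{(q,\beta)}t^{\mathrm{asc}(q)}M_\beta$ over ordered path covers, where $M_\beta=\sum_{i_1<\cdots<i_\ell}x_{i_1}^{\beta_1}\cdots x_{i_\ell}^{\beta_\ell}$. *)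

From HB Require Import structures.
From mathcomp Require Import all_boot all_order all_algebra.
From mathcomp Require Import mpoly.
Set Implicit Arguments. Unset Strict Implicit. Unset Printing Implicit Defensive.
Import GRing.Theory.
Local Open Scope ring_scope.

(* The coefficient ring: Z[t], with t the polynomial indeterminate 'X. *)
Notation Zt := {poly int}.

Section Defs.
Variables (T : finType) (lab : T -> nat).
(* [lab] identifies the vertex set with a finite subset of Z_{>0};
   "u < v" in the paper means (lab u < lab v)%N. *)

Definition digraph_of (prec : rel T) : rel T := fun u v => prec v u.

Definition incomp_graph (prec : rel T) : rel T :=
  fun u v => [&& u != v, ~~ prec u v & ~~ prec v u].

(* A colouring with colours in 'I_N; colour i stands for x_{i+1}. *)
Definition proper_col (G : rel T) (N : nat) (k : {ffun T -> 'I_N}) : bool :=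
  [forall u, forall v, G u v ==> (k u != k v)].

Definition asc_col (G : rel T) (N : nat) (k : {ffun T -> 'I_N}) : nat :=
  #|[set p : T * T | [&& G p.1 p.2, (lab p.1 < lab p.2)%N & (k p.1 < k p.2)%N]]|.

Definition chromX (G : rel T) (N : nat) : {mpoly Zt[N]} :=
  \sum_(k : {ffun T -> 'I_N} | proper_col G k)
     (('X : Zt) ^+ asc_col G k)%:MP * \prod_(v : T) 'X_(k v).

Definition psums (b : seq nat) (i : nat) : nat := sumn (take i b).

Definition is_comp (n : nat) (b : seq nat) : bool :=
  all (fun x => 0 < x)%N b && (sumn b == n).

(* (s, b) is an ordered path cover: positions are 0-based, so block i (0-based)
   occupies positions B_i, ..., B_{i+1} - 1, and consecutive entries in a block
   must be joined by an edge of D. *)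
Definition is_opc (n : nat) (D : rel T) (s : n.-tuple T) (b : seq nat) : bool :=
  [forall i : 'I_(size b), forall j : 'I_n, forall j' : 'I_n,
     [&& (j' == j.+1 :> nat), (psums b i <= j)%N & (j' < psums b i.+1)%N]
       ==> D (tnth s j) (tnth s j')].

Definition asc_seq (D : rel T) (s : seq T) : nat :=
  #|[set p : T * T |
      [&& (D p.1 p.2 && D p.2 p.1) || (~~ D p.1 p.2 && ~~ D p.2 p.1),
          (lab p.1 < lab p.2)%N &
          (index p.1 s < index p.2 s)%N]]|.

End Defs.

Definition monoM (N : nat) (b : seq nat) : {mpoly Zt[N]} :=
  \sum_(iota : (size b).-tuple 'I_N | sorted (fun a c : 'I_N => (a < c)%N) iota)
     \prod_(k < size b) 'X_(tnth iota k) ^+ nth 0%N b k.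

(* A sequencing is a bijection [n] -> V, i.e. a duplicate-free n-tuple with n = |V|;
   compositions of n have at most n parts, each at most n. *)
Definition XiD (T : finType) (lab : T -> nat) (D : rel T) (N : nat) : {mpoly Zt[N]} :=
  \sum_(s : #|T|.-tuple T | uniq s)
    \sum_(l < #|T|.+1)
      \sum_(b : l.-tuple 'I_(#|T|.+1) |
              is_comp #|T| (map val b) && is_opc D s (map val b))
        (('X : Zt) ^+ asc_seq lab D s)%:MP * monoM N (map val b).

(** Read a monomial of [M_beta] attached to an ordered path cover [(q, beta)] as the
    word [c] of colours of [q 1, ..., q n]: it is weakly increasing, and the blocks of
    [beta] are its maximal runs of equal letters, recovered by run-length encoding.
    So [Xi_D] sums [t^asc(q) x^c] over the pairs [(q, c)] with [c] weakly increasing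
    and [q j -> q (j+1)] whenever [c j = c (j+1)].  For [D = D(P)] each colour class is
    then a chain listed downwards in the order of [P], so reading [c] back on the
    vertices gives a proper colouring of [G(P)]; conversely a proper colouring
    recovers [q] by sorting the vertices by colour and, inside a colour class,
    downwards in [P].  The pairs counted by [asc q] are incomparable, hence
    differently coloured, and appear in [q] in the order of their colours, so
    [asc q] is the ascent number of the colouring. *)

From HB Require Import structures.
From mathcomp Require Import all_boot all_order all_algebra.
From mathcomp Require Import mpoly.
Set Implicit Arguments. Unset Strict Implicit. Unset Printing Implicit Defensive.
Import GRing.Theory.

Section RunLength.
Variable A : eqType.

Definition unrle (ps : seq (nat * A)) : seq A := flatten [seq nseq p.1 p.2 | p <- ps].

Definition cons_run (x : A) (ps : seq (nat * A)) : seq (nat * A) :=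
  if ps is (m, y) :: r then
    if x == y then (m.+1, y) :: r else (1, x) :: ps
  else [:: (1, x)].

Definition rle : seq A -> seq (nat * A) := foldr cons_run [::].

Lemma unrle_cons p ps : unrle (p :: ps) = nseq p.1 p.2 ++ unrle ps.
Proof. by []. Qed.

Lemma unrle_cons_run x ps : unrle (cons_run x ps) = x :: unrle ps.
Proof. by case: ps => [|[m y] r] //=; case: eqP => [->|]. Qed.

Lemma rleK : cancel rle unrle.
Proof. by elim=> [|x s IHs] //=; rewrite unrle_cons_run IHs. Qed.

Lemma rle_gt0 s : all (fun p => 0 < p.1) (rle s).
Proof.
elim: s => [|x s] //=; case: (rle s) => [|[m y] r] //=.
by case: eqP => _ /= /andP[m_gt0 ->]; rewrite ?m_gt0.
Qed.

Lemma unrleK ps : all (fun p => 0 < p.1) ps -> sorted (fun x y => x != y) (unzip2 ps) ->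
  rle (unrle ps) = ps.
Proof.
elim: ps => [|[[|m] y] ps IHps] //= ps_gt0 ps_sorted.
rewrite /rle foldr_cat -/(rle _) IHps ?(path_sorted ps_sorted) //.
elim: m => [|m IHm] /=; last by rewrite IHm /= eqxx.
by case: ps ps_sorted {IHps ps_gt0} => [|[m' y'] ps] //= /andP[/negbTE ->].
Qed.

Lemma size_unrle ps : size (unrle ps) = sumn (unzip1 ps).
Proof. by elim: ps => [|p ps IHps] //=; rewrite size_cat size_nseq IHps. Qed.

Lemma unrle_bounds ps : all (fun p => 0 < p.1) ps ->
  [/\ size ps <= size (unrle ps), all (fun p => p.1 <= size (unrle ps)) ps
     & all (fun p => p.2 \in unrle ps) ps].
Proof.
elim: ps => [|[m y] ps IHps] //= /andP[m_gt0 /IHps[le_size le_runs mem_runs]].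
rewrite unrle_cons size_cat size_nseq mem_cat mem_nseq m_gt0 eqxx leq_addr.
split=> //; first by rewrite -add1n leq_add.
- by apply: sub_all le_runs => p /leq_trans; apply; apply: leq_addl.
- by apply: sub_all mem_runs => p; rewrite mem_cat => ->; rewrite orbT.
Qed.

Lemma rle_bounds s : [/\ size (rle s) <= size s,
  all (fun p => p.1 <= size s) (rle s) & all (fun p => p.2 \in s) (rle s)].
Proof. by have := unrle_bounds (rle_gt0 s); rewrite rleK. Qed.

End RunLength.

Lemma sorted_rle s : sorted leq s -> sorted ltn (unzip2 (rle s)).
Proof.
elim: s => [|x s IHs] //= s_path; have := IHs (path_sorted s_path).
rewrite /rle /= -/(rle s); case rle_s: (rle s) => [|[m y] r] //=.
case: eqP => [_|/eqP x_neq_y] //= ->; rewrite andbT ltn_neqAle x_neq_y.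
have := rle_gt0 s; rewrite rle_s => /andP[/= m_gt0 _].
move: s_path; rewrite -(rleK s) rle_s unrle_cons.
by case: m m_gt0 {rle_s} => //= m _ /andP[].
Qed.

Lemma psumsS b bb i : psums (b :: bb) i.+1 = b + psums bb i.
Proof. by []. Qed.

Lemma leq_psums bb i i' : i <= i' -> psums bb i <= psums bb i'.
Proof.
elim: bb i i' => [|b bb IHbb] [|i] [|i'] //=; rewrite /psums ?take0 //= ?leq_addr //.
by rewrite ltnS leq_add2l; apply: IHbb.
Qed.

Lemma psums_le_sumn bb i : psums bb i <= sumn bb.
Proof.
have [le_i_size|/ltnW ?] := leqP i (size bb); last by rewrite /psums take_oversize.
by rewrite -{2}(take_size bb) leq_psums.
Qed.

Lemma psums_block bb j : j < sumn bb ->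
  exists2 i, i < size bb & psums bb i <= j < psums bb i.+1.
Proof.
elim: bb j => [|b bb IHbb] j //= lt_j_sum.
have [lt_j_b|le_b_j] := ltnP j b.
  by exists 0; rewrite // /psums /= take0 addn0.
have [|i lt_i_size] := IHbb (j - b); first by rewrite ltn_subLR.
by exists i.+1; rewrite // !psumsS -leq_subRL // -ltn_subLR.
Qed.

Section Stretch.
Variable A : eqType.

Definition stretch (bb : seq nat) (io : seq A) : seq A := unrle (zip bb io).

Lemma size_stretch bb io : size io = size bb -> size (stretch bb io) = sumn bb.
Proof. by move=> eq_size; rewrite size_unrle unzip1_zip ?eq_size. Qed.

Lemma nth_stretch x0 bb io i j : size io = size bb -> i < size bb ->
  psums bb i <= j < psums bb i.+1 -> nth x0 (stretch bb io) j = nth x0 io i.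
Proof.
elim: bb io i j => [|b bb IHbb] [|x io] i j //= [eq_size].
rewrite /stretch /= unrle_cons nth_cat size_nseq.
case: i => [|i] lt_i_size.
  by rewrite /psums /= take0 addn0 => lt_j_b; rewrite lt_j_b nth_nseq lt_j_b.
rewrite !psumsS => /andP[le_j lt_j].
rewrite ltnNge (leq_trans (leq_addr _ _) le_j) /=.
by apply: IHbb; rewrite // leq_subRL ?ltn_subLR ?le_j ?(leq_trans (leq_addr _ _) le_j).
Qed.

End Stretch.

Lemma map_stretch (A B : eqType) (f : A -> B) bb io :
  map f (stretch bb io) = stretch bb (map f io).
Proof.
elim: bb io => [|b bb IHbb] [|x io] //=.
by rewrite /stretch /= !unrle_cons map_cat map_nseq IHbb.
Qed.

Section Admissible.
Variable E : nat -> bool.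

Definition admissible (w : seq nat) : bool :=
  all (fun j => (nth 0 w j <= nth 0 w j.+1) && ((nth 0 w j == nth 0 w j.+1) ==> E j))
      (iota 0 (size w).-1).

Lemma admissibleP w : reflect (forall j, j.+1 < size w ->
    nth 0 w j <= nth 0 w j.+1 /\ (nth 0 w j = nth 0 w j.+1 -> E j)) (admissible w).
Proof.
apply: (iffP allP) => adm_w j.
  move=> lt_j_size; have /adm_w/andP[-> /implyP E_j] : j \in iota 0 (size w).-1.
    by rewrite mem_iota ltn_predRL.
  by split=> // eq_j; apply/E_j/eqP.
rewrite mem_iota ltn_predRL => /adm_w[-> E_j].
by apply/implyP => /eqP.
Qed.

Lemma admissible_sorted w : admissible w -> sorted leq w.
Proof. by move=> /admissibleP adm_w; apply/(sortedP 0) => j /adm_w[]. Qed.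

Definition within_blocks (bb : seq nat) : Prop :=
  forall i j, i < size bb -> psums bb i <= j -> j.+1 < psums bb i.+1 -> E j.

Lemma admissible_stretch bb io : size io = size bb -> sorted ltn io ->
  within_blocks bb -> admissible (stretch bb io).
Proof.
move=> eq_size io_sorted E_blocks; apply/admissibleP => j.
rewrite size_stretch // => lt_j_sum.
have [i lt_i_size j_in_i] := psums_block (ltnW lt_j_sum).
have [i' lt_i'_size j_in_i'] := psums_block lt_j_sum.
rewrite (nth_stretch _ eq_size lt_i_size j_in_i).
rewrite (nth_stretch _ eq_size lt_i'_size j_in_i').
have le_i_i' : i <= i'.
  rewrite leqNgt; apply/negP => /(leq_psums bb) le_psums.
  case/andP: j_in_i => le_j _; case/andP: j_in_i' => _ lt_j1.
  by have /ltnW := leq_trans lt_j1 (leq_trans le_psums le_j); rewrite ltnn.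
have [lt_i_i'|ge_i_i'] := ltnP i i'; last first.
  have eq_i' : i' = i by apply/eqP; rewrite eqn_leq ge_i_i' le_i_i'.
  subst i'; split=> // _.
  by apply: (E_blocks i); [|case/andP: j_in_i|case/andP: j_in_i'].
have := sorted_ltn_nth ltn_trans 0 io_sorted i i'.
rewrite !inE eq_size => /(_ lt_i_size lt_i'_size lt_i_i') lt_io.
by split=> [|eq_io]; [apply: ltnW | move: lt_io; rewrite eq_io ltnn].
Qed.

Lemma within_blocks_rle w : admissible w -> within_blocks (unzip1 (rle w)).
Proof.
move=> /admissibleP adm_w i j lt_i_size le_j lt_j1.
have eq_size : size (unzip2 (rle w)) = size (unzip1 (rle w)) by rewrite !size_map.
have w_eq : w = stretch (unzip1 (rle w)) (unzip2 (rle w)).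
  by rewrite /stretch zip_unzip rleK.
have lt_j1_size : j.+1 < size w.
  by rewrite w_eq size_stretch // (leq_trans lt_j1) ?psums_le_sumn.
apply: (adm_w j lt_j1_size).2; rewrite w_eq.
rewrite (nth_stretch _ eq_size lt_i_size (j := j)) ?le_j ?(ltn_trans _ lt_j1) //.
by rewrite (nth_stretch _ eq_size lt_i_size (j := j.+1)) ?lt_j1 ?(leq_trans le_j) ?andbT.
Qed.

Lemma stretchP w bb io : size io = size bb ->
  [/\ all (fun b => 0 < b) bb, sorted ltn io, w = stretch bb io & within_blocks bb]
  <-> [/\ admissible w, bb = unzip1 (rle w) & io = unzip2 (rle w)].
Proof.
move=> eq_size; split.
  case=> bb_gt0 io_sorted -> E_blocks.
  have -> : rle (stretch bb io) = zip bb io.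
    apply: unrleK.
      by rewrite -(all_map fst (fun b => 0 < b)) -/(unzip1 _) unzip1_zip ?eq_size.
    by rewrite unzip2_zip ?eq_size //; apply: sub_sorted io_sorted => x y /ltn_eqF ->.
  by rewrite unzip1_zip ?unzip2_zip ?eq_size //; split; rewrite ?admissible_stretch.
case=> adm_w -> ->; split.
- by rewrite all_map; apply: rle_gt0.
- exact/sorted_rle/admissible_sorted.
- by rewrite /stretch zip_unzip rleK.
- exact: within_blocks_rle.
Qed.

End Admissible.

Lemma map_val_pmap_insub K (v : seq nat) : all (fun y => y < K) v ->
  map val (pmap (insub : nat -> option 'I_K) v) = v.
Proof.
elim: v => [|y v IHv] //= /andP[lt_y lt_v].
by case: insubP => [u _ val_u|] /=; rewrite ?val_u ?IHv ?lt_y.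
Qed.

Lemma sum_tuple_map_val K m (v : seq nat) :
  \sum_(x : m.-tuple 'I_K) (map val x == v) = (size v == m) && all (fun y => y < K) v.
Proof.
have [/andP[/eqP size_v lt_v]|v_out] := boolP ((size v == m) && _); last first.
  apply: big1 => x; case: eqP => // map_x; case/negP: v_out.
  by rewrite -map_x size_map size_tuple eqxx; apply/allP => _ /mapP[y _ ->]; apply: ltn_ord.
have size_pv : size (pmap (insub : nat -> option 'I_K) v) == m.
  by rewrite -(size_map val) map_val_pmap_insub ?size_v.
rewrite (bigD1 (Tuple size_pv)) //= map_val_pmap_insub // eqxx big1 // => x.
case: (map val x =P v) => // map_x /negP[]; apply/eqP/val_inj/(inj_map val_inj) => /=.
by rewrite map_x map_val_pmap_insub.
Qed.

Lemma sum_ord_eq m k : \sum_(l < m) (k == l :> nat) = (k < m).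
Proof.
have [lt_k_m|ge_k_m] := ltnP k m; last first.
  by apply: big1 => l; case: eqP => // eq_k; rewrite eq_k leqNgt ltn_ord in ge_k_m.
rewrite (bigD1 (Ordinal lt_k_m)) //= eqxx big1 // => l.
by case: (k =P l) => // eq_k /negP[]; apply/eqP/val_inj.
Qed.

Section PathCovers.
Variables (T : finType) (D : rel T).
Local Notation n := #|T|.

Definition step_edge (s : seq T) (j : nat) : bool :=
  if s is x :: _ then D (nth x s j) (nth x s j.+1) else false.

Lemma step_edgeE x0 (s : seq T) j : j.+1 < size s ->
  step_edge s j = D (nth x0 s j) (nth x0 s j.+1).
Proof.
case: s => [|x s] // lt_j1_size.
by rewrite /= !(set_nth_default x0) // ltnW.
Qed.

Lemma is_opcE (s : n.-tuple T) bb : sumn bb = n ->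
  is_opc D s bb <-> within_blocks (step_edge s) bb.
Proof.
move=> sum_bb; split.
  move=> /forallP opc_s i j lt_i_size le_j lt_j1.
  have lt_j1_n : j.+1 < n by rewrite -sum_bb (leq_trans lt_j1) ?psums_le_sumn.
  have /forallP/(_ (Ordinal (ltnW lt_j1_n)))/forallP/(_ (Ordinal lt_j1_n)) :=
    opc_s (Ordinal lt_i_size).
  have x0 : T := tnth s (Ordinal lt_j1_n).
  rewrite (step_edgeE x0) ?size_tuple // !(tnth_nth x0) => /implyP; apply.
  exact/and3P.
move=> E_blocks; apply/forallP => i; apply/forallP => j; apply/forallP => j'.
apply/implyP => /and3P[/eqP eq_j' le_j lt_j'].
have lt_j1 : j.+1 < psums bb i.+1 by rewrite -eq_j'.
have := E_blocks i j (ltn_ord i) le_j lt_j1.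
have x0 : T := tnth s j.
rewrite (step_edgeE x0) ?size_tuple; last by rewrite -eq_j'.
by rewrite !(tnth_nth x0) eq_j'.
Qed.

Variable N : nat.

Definition compatible (p : n.-tuple T * n.-tuple 'I_N) : bool :=
  uniq p.1 && admissible (step_edge p.1) (map val p.2).

Lemma opc_stretchE (s : n.-tuple T) bb (io c : seq 'I_N) :
  size io = size bb -> size c = n ->
  [&& is_comp n bb && is_opc D s bb, sorted (fun a c : 'I_N => a < c) io
    & c == stretch bb io]
  = [&& admissible (step_edge s) (map val c), bb == unzip1 (rle (map val c))
    & map val io == unzip2 (rle (map val c))].
Proof.
move=> eq_size size_c; have eq_size' : size (map val io) = size bb by rewrite size_map.
have -> : sorted (fun a c : 'I_N => a < c) io = sorted ltn (map val io).
  by rewrite sorted_map.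
rewrite -(inj_eq (inj_map val_inj)) map_stretch.
apply/idP/idP.
  case/and3P=> [/andP[/andP[bb_gt0 /eqP sum_bb] opc_s] io_sorted /eqP c_eq].
  have [adm_c -> ->] := (stretchP (step_edge s) (map val c) eq_size').1
    (And4 bb_gt0 io_sorted c_eq ((is_opcE s sum_bb).1 opc_s)).
  by rewrite adm_c !eqxx.
case/and3P=> [adm_c /eqP bb_eq /eqP io_eq].
have [bb_gt0 io_sorted c_eq E_blocks] :=
  (stretchP (step_edge s) (map val c) eq_size').2 (And3 adm_c bb_eq io_eq).
have sum_bb : sumn bb = n by rewrite -(size_stretch eq_size') -c_eq size_map.
by rewrite /is_comp bb_gt0 sum_bb eqxx (is_opcE s sum_bb).2 // io_sorted c_eq eqxx.
Qed.

Lemma count_opc_stretch (s : n.-tuple T) (c : n.-tuple 'I_N) :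
  \sum_(l < n.+1)
    \sum_(b : l.-tuple 'I_n.+1 | is_comp n (map val b) && is_opc D s (map val b))
      \sum_(io : (size (map val b)).-tuple 'I_N | sorted (fun a c : 'I_N => a < c) io)
        (val c == stretch (map val b) io)
  = admissible (step_edge s) (map val c).
Proof.
set w := map val c; set BB := unzip1 (rle w); set IO := unzip2 (rle w).
have size_w : size w = n by rewrite size_map size_tuple.
have [le_size le_runs mem_runs] := rle_bounds w.
have size_IO : size IO = size BB by rewrite !size_map.
have lt_IO : all (fun y => y < N) IO.
  rewrite all_map; apply: sub_all mem_runs => p /mapP[y _ p_eq] /=.
  by rewrite p_eq ltn_ord.
have lt_BB : all (fun y => y < n.+1) BB by rewrite all_map -size_w.
have count_b l (b : l.-tuple 'I_n.+1) :
    (if is_comp n (map val b) && is_opc D s (map val b) then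
      \sum_(io : (size (map val b)).-tuple 'I_N | sorted (fun a c : 'I_N => a < c) io)
        (val c == stretch (map val b) io) else 0)
    = admissible (step_edge s) w && (map val b == BB).
  transitivity (\sum_(io : (size (map val b)).-tuple 'I_N)
      [&& is_comp n (map val b) && is_opc D s (map val b),
          sorted (fun a c : 'I_N => a < c) io & val c == stretch (map val b) io]).
    case: ifP => _; last by rewrite big1.
    by rewrite big_mkcond; apply: eq_bigr => io _; case: sorted.
  under eq_bigr => io _ do rewrite opc_stretchE ?size_tuple // andbA -mulnb.
  rewrite -big_distrr /= sum_tuple_map_val lt_IO andbT.
  rewrite -/w -/BB -/IO size_IO.
  by case: eqP => [->|_]; rewrite ?eqxx ?andbT ?muln1 ?andbF.
under eq_bigr => l _.
  rewrite big_mkcond (eq_bigr _ (fun b _ => count_b l b)).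
  under eq_bigr => b _ do rewrite -mulnb.
  rewrite -big_distrr /= sum_tuple_map_val lt_BB andbT.
  over.
have le_BB : size BB <= n by rewrite size_map -size_w.
by rewrite -big_distrr /= sum_ord_eq ltnS le_BB muln1.
Qed.

End PathCovers.

Section MonomialExpansion.
Local Open Scope ring_scope.

Lemma prod_stretch (R : pzSemiRingType) (A : eqType) (F : A -> R) x0 bb io :
  size io = size bb ->
  \prod_(x <- stretch bb io) F x = \prod_(k < size bb) F (nth x0 io k) ^+ nth 0%N bb k.
Proof.
elim: bb io => [|b bb IHbb] [|x io] //=; first by rewrite big_nil big_ord0.
case=> eq_size; rewrite big_ord_recl /stretch /= unrle_cons big_cat big_nseq.
by rewrite iter_mulr_1 -IHbb.
Qed.

Lemma monoM_stretch N bb : monoM N bb =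
  \sum_(io : (size bb).-tuple 'I_N | sorted (fun a c : 'I_N => (a < c)%N) io)
     \prod_(x <- stretch bb io) 'X_x.
Proof.
apply: eq_bigr => io _; case: bb io => [|b bb] io.
  by rewrite tuple0 big_ord0 big_nil.
rewrite (prod_stretch _ (tnth io ord0)) ?size_tuple //.
by apply: eq_bigr => k _; rewrite -tnth_nth.
Qed.

Lemma sum_tuple_eq (R : pzSemiRingType) (A : finType) m (v : seq A) (F : seq A -> R) :
  size v = m -> \sum_(c : m.-tuple A) (val c == v)%:R * F c = F v.
Proof.
move=> size_v; have size_v' : size v == m by apply/eqP.
rewrite (bigD1 (Tuple size_v')) //= eqxx mul1r big1 ?addr0 // => c.
by case: (val c =P v) => [val_c /negP[]|_ _]; rewrite ?mul0r //; apply/eqP/val_inj.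
Qed.

Lemma sum_opc_monoM (T : finType) (D : rel T) N (s : #|T|.-tuple T) :
  \sum_(l < #|T|.+1)
    \sum_(b : l.-tuple 'I_#|T|.+1 | is_comp #|T| (map val b) && is_opc D s (map val b))
      monoM N (map val b)
  = \sum_(c : #|T|.-tuple 'I_N | admissible (step_edge D s) (map val c))
      \prod_(x <- c) 'X_x.
Proof.
pose F (c : seq 'I_N) : {mpoly Zt[N]} := \prod_(x <- c) 'X_x.
under eq_bigr => l _.
  under eq_bigr => b /andP[/andP[_ /eqP sum_b] _].
    rewrite monoM_stretch.
    under eq_bigr => io _ do
      rewrite -/(F _) -(sum_tuple_eq F (etrans (size_stretch (size_tuple io)) sum_b)).
    rewrite exchange_big /=.
    over.
  rewrite exchange_big /=.
  over.
rewrite exchange_big /= [RHS]big_mkcond; apply: eq_bigr => c _.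
rewrite -mulrb -mulr_natl -(count_opc_stretch D s c) natr_sum mulr_suml; apply: eq_bigr => l _.
rewrite natr_sum mulr_suml; apply: eq_bigr => b _.
by rewrite natr_sum mulr_suml.
Qed.

End MonomialExpansion.

Lemma mem_uniq_card (T : finType) (s : #|T|.-tuple T) : uniq s -> forall v, v \in s.
Proof.
move=> s_uniq v; have sub_s : {subset s <= enum T} by move=> x _; rewrite mem_enum.
have [|_ ->] := uniq_min_size s_uniq sub_s; last by rewrite mem_enum.
by rewrite !size_tuple.
Qed.

Lemma admissible_step_chain (T : finType) (R : rel T) (s : seq T) w x0 i j :
  transitive R -> admissible (step_edge R s) w -> size w = size s ->
  i < j < size s -> nth 0 w i = nth 0 w j -> R (nth x0 s i) (nth x0 s j).
Proof.
move=> R_trans adm_w eq_size; elim: j => [//|j IHj] /andP[le_i_j lt_j1] eq_ij.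
have lt_j1' : j.+1 < size w by rewrite eq_size.
have w_sorted := admissible_sorted adm_w.
have le_wi_wj : nth 0 w i <= nth 0 w j.
  apply: (sorted_leq_nth leq_trans leqnn 0 w_sorted); rewrite ?inE ?eq_size //.
  - exact: ltn_trans lt_j1.
  - exact: ltnW.
have [le_wj E_j] := (admissibleP _ _ adm_w) j lt_j1'.
have eq_j : nth 0 w j = nth 0 w j.+1.
  by apply/eqP; rewrite eqn_leq le_wj -eq_ij le_wi_wj.
have R_j := E_j eq_j; rewrite (step_edgeE R x0) // in R_j.
have [->|ne_ij] := eqVneq i j; first exact: R_j.
apply: R_trans R_j; apply: IHj; last by rewrite eq_j.
by rewrite ltn_neqAle ne_ij -ltnS le_i_j ltnW.
Qed.

Section Colourings.
Variables (T : finType) (lab : T -> nat) (prec : rel T) (N : nat).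
Hypotheses (prec_irr : irreflexive prec) (prec_trans : transitive prec).
Local Notation n := #|T|.
Local Notation D := (digraph_of prec).
Local Notation G := (incomp_graph prec).
Implicit Types (k : {ffun T -> 'I_N}) (s : n.-tuple T) (c : n.-tuple 'I_N).

Lemma prec_asym u v : prec u v -> ~~ prec v u.
Proof. by move=> lt_uv; apply/negP => /(prec_trans lt_uv); rewrite prec_irr. Qed.

Lemma proper_comparable k u v : proper_col G k -> k u = k v -> u != v ->
  prec u v || prec v u.
Proof.
move=> /forallP/(_ u)/forallP/(_ v)/implyP k_proper eq_kuv ne_uv.
apply: contraT; rewrite negb_or => /andP[nlt_uv nlt_vu].
by have := k_proper (introT and3P (And3 ne_uv nlt_uv nlt_vu)); rewrite eq_kuv eqxx.
Qed.

Definition col_le k : rel T :=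
  fun u v => (k u < k v)%N || (k u == k v) && ~~ prec u v.

Definition col_sequencing k : n.-tuple T := [tuple of sort (col_le k) (enum T)].

Lemma col_sequencing_uniq k : uniq (col_sequencing k).
Proof. by rewrite sort_uniq enum_uniq. Qed.

Lemma perm_col_sequencing k : perm_eq (col_sequencing k) (enum T).
Proof. by rewrite perm_sort. Qed.

Section ProperColouring.
Variable k : {ffun T -> 'I_N}.
Hypothesis k_proper : proper_col G k.

Lemma col_le_total : total (col_le k).
Proof.
move=> u v; rewrite /col_le; case: ltngtP => [||/val_inj eq_k] //=; rewrite ?orbT //.
rewrite eq_k eqxx /=; have [->|ne_uv] := eqVneq u v; first by rewrite prec_irr.
by case/orP: (proper_comparable k_proper eq_k ne_uv) => /prec_asym ->; rewrite ?orbT.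
Qed.

Lemma col_le_trans : transitive (col_le k).
Proof.
move=> y x z; rewrite /col_le.
case/orP => [lt_xy|/andP[/eqP eq_xy nlt_xy]]; case/orP => [lt_yz|/andP[/eqP eq_yz nlt_yz]].
- by rewrite (ltn_trans lt_xy lt_yz).
- by rewrite -eq_yz lt_xy.
- by rewrite eq_xy lt_yz.
rewrite eq_xy eq_yz eqxx ltnn /=; have [->//|ne_xy] := eqVneq x y.
have /orP[lt_xy|lt_yx] := proper_comparable k_proper eq_xy ne_xy.
  by rewrite lt_xy in nlt_xy.
by apply: contra nlt_yz => /(prec_trans lt_yx).
Qed.

Lemma col_le_anti : antisymmetric (col_le k).
Proof.
move=> u v; rewrite /col_le => /andP[].
case/orP => [lt_uv|/andP[/eqP eq_uv nlt_uv]]; case/orP => [lt_vu|/andP[/eqP eq_vu nlt_vu]].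
- by have := ltn_trans lt_uv lt_vu; rewrite ltnn.
- by move: lt_uv; rewrite eq_vu ltnn.
- by move: lt_vu; rewrite eq_uv ltnn.
apply/eqP; apply: contraT => ne_uv.
by case/orP: (proper_comparable k_proper eq_uv ne_uv) => lt; rewrite lt in nlt_uv nlt_vu.
Qed.

Lemma index_col_sequencing u v : k u != k v ->
  (index u (col_sequencing k) < index v (col_sequencing k)) = (k u < k v).
Proof.
move=> ne_k; set s := col_sequencing k.
have s_mem := mem_uniq_card (col_sequencing_uniq k).
have idx_lt w : index w s < size s by rewrite index_mem.
have col_le_idx x y : index x s < index y s -> col_le k x y.
  move=> lt_idx; have := sorted_ltn_nth col_le_trans x (sort_sorted col_le_total (enum T)).
  by move=> /(_ (index x s) (index y s) (idx_lt x) (idx_lt y) lt_idx); rewrite !nth_index.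
have eq_k_false x y : k x != k y -> (k x == k y) && ~~ prec x y = false.
  by move=> /negbTE ->.
apply/idP/idP => [/col_le_idx|lt_k].
  by rewrite /col_le eq_k_false ?orbF.
case: ltngtP => [//|/col_le_idx|eq_idx].
  by rewrite /col_le eq_k_false 1?eq_sym // orbF => /(ltn_trans lt_k); rewrite ltnn.
by move: ne_k; rewrite -(nth_index u (s_mem u)) eq_idx nth_index ?eqxx.
Qed.

Lemma asc_col_sequencing : asc_seq lab D (col_sequencing k) = asc_col lab G k.
Proof.
rewrite /asc_seq /asc_col; apply: eq_card => -[u v]; rewrite !inE /=.
have [<-|ne_uv] := eqVneq u v; first by rewrite ltnn !andbF.
rewrite /digraph_of /incomp_graph ne_uv /=.
case lt_uv: (prec u v); case lt_vu: (prec v u) => //=.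
  by move: (prec_asym lt_uv); rewrite lt_vu.
have ne_k : k u != k v.
  by move/forallP/(_ u)/forallP/(_ v): k_proper; rewrite /incomp_graph ne_uv lt_uv lt_vu.
by rewrite index_col_sequencing.
Qed.

Lemma proper_compatible :
  compatible D (col_sequencing k, map_tuple k (col_sequencing k)).
Proof.
apply/andP; split; first exact: col_sequencing_uniq.
apply/admissibleP => j; rewrite !size_map size_tuple => lt_j1.
have x0 : T := enum_val (Ordinal lt_j1).
have size_s : size (col_sequencing k) = n by rewrite size_tuple.
have /(sortedP x0)/(_ j) := sort_sorted col_le_total (enum T).
rewrite -/(tval (col_sequencing k)) size_s => /(_ lt_j1).
rewrite -map_comp !(nth_map x0) ?size_s ?(ltnW lt_j1) // (step_edgeE _ x0) ?size_s //=.
set u := nth x0 _ j; set v := nth x0 _ j.+1.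
case/orP => [lt_kuv|/andP[/eqP eq_kuv nlt_uv]].
  by split=> [|eq_kuv]; [apply: ltnW | move: lt_kuv; rewrite eq_kuv ltnn].
split=> [|_]; first by rewrite eq_kuv.
have ne_uv : u != v.
  by rewrite nth_uniq ?size_s ?(ltnW lt_j1) ?col_sequencing_uniq // ltn_eqF.
by case/orP: (proper_comparable k_proper eq_kuv ne_uv) => // lt_uv; rewrite lt_uv in nlt_uv.
Qed.

End ProperColouring.

(* [enum_rank v] is a mere default: [index v s] is in range whenever [v \in s]. *)
Definition colouring_of s c : {ffun T -> 'I_N} :=
  [ffun v => tnth c (insubd (enum_rank v) (index v s))].

Lemma colouring_ofE s c v : uniq s ->
  val (colouring_of s c v) = nth 0 (map val c) (index v s).
Proof.
move=> s_uniq; rewrite ffunE.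
have lt_v : index v s < n by rewrite -[X in _ < X](size_tuple s) index_mem mem_uniq_card.
set j := insubd _ _; have val_j : val j = index v s by rewrite val_insubd lt_v.
by rewrite (tnth_nth (tnth c j)) (nth_map (tnth c j)) ?size_tuple // val_j.
Qed.

Lemma colouring_of_sequencing k :
  colouring_of (col_sequencing k) (map_tuple k (col_sequencing k)) = k.
Proof.
apply/ffunP => v; apply/val_inj; rewrite colouring_ofE ?col_sequencing_uniq //.
have v_in : v \in col_sequencing k by apply/mem_uniq_card/col_sequencing_uniq.
by rewrite -map_comp (nth_map v) ?index_mem //= nth_index.
Qed.

Lemma map_colouring_of s c : uniq s -> map_tuple (colouring_of s c) s = c.
Proof.
move=> s_uniq; apply/val_inj/(inj_map val_inj)/(@eq_from_nth _ 0).
  by rewrite !size_map !size_tuple.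
move=> i; rewrite !size_map size_tuple => lt_i; have x0 : T := tnth s (Ordinal lt_i).
by rewrite -map_comp (nth_map x0) ?size_tuple //= colouring_ofE // index_uniq ?size_tuple.
Qed.

Lemma compatible_proper s c : compatible D (s, c) -> proper_col G (colouring_of s c).
Proof.
move=> /andP[/= s_uniq adm_c]; have s_mem := mem_uniq_card s_uniq.
apply/forallP => u; apply/forallP => v; apply/implyP => /and3P[ne_uv nlt_uv nlt_vu].
apply/eqP => /(congr1 val); rewrite !colouring_ofE // => eq_c.
have D_trans : transitive D by move=> y x z /= lt_yx lt_zy; apply: prec_trans lt_zy lt_yx.
have size_c : size (map val c) = size s by rewrite size_map !size_tuple.
have chain := admissible_step_chain u D_trans adm_c size_c.
have idx_lt w : index w s < size s by rewrite index_mem.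
case: (ltngtP (index u s) (index v s)) => [lt_idx|lt_idx|eq_idx].
- have := chain _ _ (introT andP (conj lt_idx (idx_lt v))) eq_c.
  by rewrite !nth_index // /digraph_of (negbTE nlt_vu).
- have := chain _ _ (introT andP (conj lt_idx (idx_lt u))) (esym eq_c).
  by rewrite !nth_index // /digraph_of (negbTE nlt_uv).
by move: ne_uv; rewrite -(nth_index u (s_mem u)) eq_idx nth_index ?eqxx.
Qed.

Lemma compatible_sorted s c : compatible D (s, c) -> sorted (col_le (colouring_of s c)) s.
Proof.
move=> /andP[/= s_uniq adm_c]; case s_eq : (tval s) => [//|x0 t]; rewrite -s_eq.
apply/(sortedP x0) => j; rewrite size_tuple => lt_j1.
have col_nth i : i < n -> val (colouring_of s c (nth x0 s i)) = nth 0 (map val c) i.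
  by move=> lt_i; rewrite colouring_ofE // index_uniq ?size_tuple.
have lt_j1' : j.+1 < size (map val c) by rewrite size_map size_tuple.
have [le_cj E_j] := (admissibleP _ _ adm_c) j lt_j1'.
rewrite /col_le !col_nth ?(ltnW lt_j1) //.
move: le_cj; rewrite leq_eqVlt => /orP[/eqP eq_cj|->//]; apply/orP; right.
apply/andP; split; first by apply/eqP/val_inj; rewrite !col_nth ?eq_cj // ltnW.
by move: (E_j eq_cj); rewrite (step_edgeE _ x0) ?size_tuple //; apply: prec_asym.
Qed.

Lemma compatible_sequencing s c : compatible D (s, c) -> col_sequencing (colouring_of s c) = s.
Proof.
move=> compat; have k_proper := compatible_proper compat; apply/val_inj => /=.
apply: (sorted_eq (col_le_trans k_proper) (col_le_anti k_proper)).
- exact/sort_sorted/col_le_total.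
- exact: compatible_sorted.
rewrite perm_sort; apply: uniq_perm; rewrite ?enum_uniq //; first by case/andP: compat.
by move=> v; rewrite mem_enum mem_uniq_card //; case/andP: compat.
Qed.

Lemma compatible_col_sequencing k :
  compatible D (col_sequencing k, map_tuple k (col_sequencing k)) = proper_col G k.
Proof.
apply/idP/idP => [/compatible_proper|/proper_compatible //].
by rewrite colouring_of_sequencing.
Qed.

End Colourings.


Section Reindexing.
Local Open Scope ring_scope.

Lemma XiD_compatible (T : finType) (lab : T -> nat) (D : rel T) N :
  XiD lab D N = \sum_(p : #|T|.-tuple T * #|T|.-tuple 'I_N | compatible D p)
                  (('X : Zt) ^+ asc_seq lab D p.1)%:MP * \prod_(x <- p.2) 'X_x.
Proof.
transitivity (\sum_(s : #|T|.-tuple T | uniq s)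
    \sum_(c : #|T|.-tuple 'I_N | admissible (step_edge D s) (map val c))
      (('X : Zt) ^+ asc_seq lab D s)%:MP * \prod_(x <- c) 'X_x); last exact: pair_big_dep.
apply: eq_bigr => s _.
under eq_bigr => l _ do rewrite -big_distrr /=.
by rewrite -big_distrr /= sum_opc_monoM big_distrr.
Qed.

Lemma sum_compatible_chromX (T : finType) (lab : T -> nat) (prec : rel T) N :
  irreflexive prec -> transitive prec ->
  \sum_(p : #|T|.-tuple T * #|T|.-tuple 'I_N | compatible (digraph_of prec) p)
     (('X : Zt) ^+ asc_seq lab (digraph_of prec) p.1)%:MP * \prod_(x <- p.2) 'X_x
  = chromX lab (incomp_graph prec) N.
Proof.
move=> prec_irr prec_trans.
pose seq_of (k : {ffun T -> 'I_N}) :=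
  (col_sequencing prec k, map_tuple k (col_sequencing prec k)).
rewrite /chromX (reindex seq_of) /=.
  apply: eq_big => [k|k]; rewrite compatible_col_sequencing // => k_proper.
  rewrite asc_col_sequencing // big_map (perm_big _ (perm_col_sequencing prec k)).
  by rewrite big_enum.
exists (fun p => colouring_of p.1 p.2) => [k _|[s c]]; first exact: colouring_of_sequencing.
rewrite inE => compat_sc; rewrite /seq_of /= compatible_sequencing //.
by rewrite map_colouring_of //; case/andP: compat_sc.
Qed.

End Reindexing.

Theorem proposition3p5 (T : finType) (lab : T -> nat) (prec : rel T) :
  injective lab -> (forall v, (0 < lab v)%N) ->
  irreflexive prec -> transitive prec ->
  forall N : nat,
    XiD lab (digraph_of prec) N = chromX lab (incomp_graph prec) N.
Proof.
move=> _ _ prec_irr prec_trans N.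
by rewrite XiD_compatible sum_compatible_chromX.
Qed.
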